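(* Let $z^+=(z_1^+,\dots,z_n^+)$ and $z^-=(z_1^-,\dots,z_n^-)$ be sequences of integers, $I_1=\{i:z_i^+>0\}$, $I_2=\{i:z_i^->0\}$, and $f_z(a)=\sum_i|z_i^+-a_i^+|+\sum_i|z_i^--a_i^-|$ for bi-sequences $a=(a^+,a^-)$. Let $d\in B_n$ satisfy $f_z(d)=\min_{a\in B_n}f_z(a)$. (1) If $d_i^+>0$ for some $i\notin I_1$, then there exists $d_*\in B_n$ with $d_{*i}^+=0$ for all $i\notin I_1$ and $f_z(d_* )=f_z(d)$. (2) If $d_i^->0$ for some $i\notin I_2$, then there exists $d_*\in B_n$ with $d_{*i}^-=0$ for all $i\notin I_2$ and $f_z(d_* )=f_z(d)$.
   Context: $B_n$ is the set of all bi-degree sequences $a=(a^+,a^-)$ (out-degrees $a_i^+$, in-degrees $a_i^-$) of simple directed graphs (no loops, no multiple edges) on nodes $\{1,\dots,n\}$. *)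

From mathcomp Require Import all_boot all_order all_algebra.
Set Implicit Arguments. Unset Strict Implicit. Unset Printing Implicit Defensive.
Import Order.TTheory GRing.Theory Num.Theory.
Local Open Scope ring_scope.

(* A bi-sequence on nodes 'I_n : a pair (out-sequence, in-sequence). *)
Definition biseq (n : nat) := (('I_n -> nat) * ('I_n -> nat))%type.

(* A simple directed graph on 'I_n: an irreflexive relation g
   (g i j means there is an arc i -> j); multiple arcs are impossible. *)
Definition simple_digraph (n : nat) (g : rel 'I_n) : Prop := forall i, ~~ g i i.

Definition outdeg (n : nat) (g : rel 'I_n) (i : 'I_n) : nat := #|[set j | g i j]|.
Definition indeg (n : nat) (g : rel 'I_n) (i : 'I_n) : nat := #|[set j | g j i]|.

Definition in_Bn (n : nat) (a : biseq n) : Prop :=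
  exists g : rel 'I_n, simple_digraph g /\
    (forall i, a.1 i = outdeg g i) /\ (forall i, a.2 i = indeg g i).

Definition fz (n : nat) (zp zm : 'I_n -> int) (a : biseq n) : int :=
  \sum_(i < n) `|zp i - (a.1 i)%:Z| + \sum_(i < n) `|zm i - (a.2 i)%:Z|.

(** Deleting every arc whose tail [i] has [z_i^+ <= 0] sets those out-degrees
    to 0; each of them lies on the side of [z_i^+] where [|z_i^+ - a|] is
    increasing, so the out-part of [f_z] drops by exactly the number [k] of
    deleted arcs, while the in-degrees drop by [k] in total and the in-part
    grows by at most [k]. Hence [f_z] does not increase, and at a minimiser it
    stays equal. Part (2) is part (1) for the reversed digraph. *)

From mathcomp Require Import all_boot all_order all_algebra.
From mathcomp Require Import zify lra.
Set Implicit Arguments. Unset Strict Implicit. Unset Printing Implicit Defensive.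
Import Order.TTheory GRing.Theory Num.Theory.
Local Open Scope ring_scope.

Lemma Posz_sum (I : finType) (F : I -> nat) :
  (\sum_i F i)%N%:Z = \sum_i (F i)%:Z.
Proof. by rewrite -natz natr_sum; apply: eq_bigr => i _; rewrite natz. Qed.

Section Digraphs.

Variable n : nat.
Implicit Types (g : rel 'I_n) (P : pred 'I_n).

Lemma sum_outdeg_indeg g : (\sum_i outdeg g i = \sum_j indeg g j)%N.
Proof.
rewrite /outdeg /indeg; under eq_bigr do rewrite -sum1dep_card big_mkcond.
rewrite exchange_big; apply: eq_bigr => j _.
by rewrite -sum1dep_card [RHS]big_mkcond.
Qed.

Definition restrict_src P g : rel 'I_n := fun i j => P i && g i j.

Lemma simple_restrict_src P g :
  simple_digraph g -> simple_digraph (restrict_src P g).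
Proof. by move=> sg i; rewrite /restrict_src negb_and sg orbT. Qed.

Lemma outdeg_restrict_src P g i :
  outdeg (restrict_src P g) i = if P i then outdeg g i else 0%N.
Proof.
rewrite /outdeg /restrict_src; case: (P i).
  by apply: eq_card => j; rewrite !inE.
by rewrite -[RHS](cards0 'I_n); apply: eq_card => j; rewrite !inE.
Qed.

Lemma indeg_restrict_src_le P g j : (indeg (restrict_src P g) j <= indeg g j)%N.
Proof. by apply/subset_leq_card/subsetP => i; rewrite !inE => /andP[]. Qed.

Definition bideg g : biseq n := (outdeg g, indeg g).

Lemma bideg_in_Bn g : simple_digraph g -> in_Bn (bideg g).
Proof. by move=> sg; exists g. Qed.

Lemma eq_fz (zp zm : 'I_n -> int) (a b : biseq n) :
  a.1 =1 b.1 -> a.2 =1 b.2 -> fz zp zm a = fz zp zm b.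
Proof.
by move=> e1 e2; congr (_ + _); apply: eq_bigr => i _; rewrite ?e1 ?e2.
Qed.

Lemma fz_restrict_src_le (zp zm : 'I_n -> int) g :
  fz zp zm (bideg (restrict_src (fun i => 0 < zp i) g)) <= fz zp zm (bideg g).
Proof.
set g' := restrict_src _ g.
have out_eq i : `|zp i - (outdeg g' i)%:Z| + (outdeg g i)%:Z
              = `|zp i - (outdeg g i)%:Z| + (outdeg g' i)%:Z.
  rewrite outdeg_restrict_src; case: ltrP => // zp_le0; lia.
have in_le j : `|zm j - (indeg g' j)%:Z| + (indeg g' j)%:Z
             <= `|zm j - (indeg g j)%:Z| + (indeg g j)%:Z.
  have : (indeg g' j <= indeg g j)%N by exact: indeg_restrict_src_le.
  lia.
have arcs (h : rel 'I_n) : \sum_i (outdeg h i)%:Z = \sum_j (indeg h j)%:Z.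
  by rewrite -!Posz_sum sum_outdeg_indeg.
have out_sum : \sum_i `|zp i - (outdeg g' i)%:Z| + \sum_i (outdeg g i)%:Z
              = \sum_i `|zp i - (outdeg g i)%:Z| + \sum_i (outdeg g' i)%:Z.
  by rewrite -!big_split; apply: eq_bigr => i _; apply: out_eq.
have in_sum : \sum_j `|zm j - (indeg g' j)%:Z| + \sum_j (indeg g' j)%:Z
             <= \sum_j `|zm j - (indeg g j)%:Z| + \sum_j (indeg g j)%:Z.
  by rewrite -!big_split; apply: ler_sum => j _; apply: in_le.
have := arcs g; have := arcs g'; rewrite /fz /bideg /=; lra.
Qed.

End Digraphs.

Lemma prune_out_support n (zp zm : 'I_n -> int) (d : biseq n) :
  in_Bn d -> (forall a : biseq n, in_Bn a -> fz zp zm d <= fz zp zm a) ->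
  exists ds : biseq n, in_Bn ds /\
    (forall i : 'I_n, ~~ (0 < zp i) -> ds.1 i = 0%N) /\
    fz zp zm ds = fz zp zm d.
Proof.
move=> [g [sg [dE1 dE2]]] d_min; set g' := restrict_src (fun i => 0 < zp i) g.
have Bg' : in_Bn (bideg g') by apply/bideg_in_Bn/simple_restrict_src.
exists (bideg g'); split=> //; split=> [i /negbTE zp_le0 | ].
  by rewrite /= outdeg_restrict_src zp_le0.
apply/eqP; rewrite eq_le d_min // andbT.
by rewrite (@eq_fz _ zp zm d (bideg g) dE1 dE2) fz_restrict_src_le.
Qed.

Definition swap_biseq n (a : biseq n) : biseq n := (a.2, a.1).

Lemma swap_biseqK n : involutive (@swap_biseq n).
Proof. by case. Qed.

Lemma in_Bn_swap n (a : biseq n) : in_Bn a -> in_Bn (swap_biseq a).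
Proof. by move=> [g [sg [aE1 aE2]]]; exists (fun i j => g j i). Qed.

Lemma fz_swap n (zp zm : 'I_n -> int) (a : biseq n) :
  fz zp zm (swap_biseq a) = fz zm zp a.
Proof. by rewrite /fz addrC. Qed.

Theorem proposition3 (n : nat) (zp zm : 'I_n -> int) (d : biseq n) :
  in_Bn d ->
  (forall a : biseq n, in_Bn a -> fz zp zm d <= fz zp zm a) ->
  ((exists i : 'I_n, ~~ (0 < zp i) /\ (0 < d.1 i)%N) ->
     exists ds : biseq n, in_Bn ds /\
       (forall i : 'I_n, ~~ (0 < zp i) -> ds.1 i = 0%N) /\
       fz zp zm ds = fz zp zm d) /\
  ((exists i : 'I_n, ~~ (0 < zm i) /\ (0 < d.2 i)%N) ->
     exists ds : biseq n, in_Bn ds /\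
       (forall i : 'I_n, ~~ (0 < zm i) -> ds.2 i = 0%N) /\
       fz zp zm ds = fz zp zm d).
Proof.
(* Pruning a minimiser always works. *)
move=> Bd d_min; split=> _; first exact: prune_out_support.
have swap_min a : in_Bn a -> fz zm zp (swap_biseq d) <= fz zm zp a.
  move=> Ba; rewrite -[a]swap_biseqK 2!fz_swap.
  by apply: d_min; exact: in_Bn_swap.
have [ds [Bds [ds0 fz_ds]]] := prune_out_support (in_Bn_swap Bd) swap_min.
exists (swap_biseq ds); split; first exact: in_Bn_swap.
by split=> //; rewrite fz_swap fz_ds fz_swap.
Qed.
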